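(* (a) For every $\varepsilon>0$ there is a single-item instance with two agents and SOS valuations such that every ex-post IC-IR mechanism (randomized, not necessarily universally) has, at some signal profile $\mathbf{s}$, expected welfare at most $(\tfrac12+\varepsilon)$ times the optimal welfare $\max_i v_i(\mathbf{s})$. (b) For every integer $m\ge3$ and $d=m^2$, there is a single-item instance with $n=m=\sqrt d$ agents and $d$-SOS valuations such that every ex-post IC-IR mechanism has, at some signal profile, expected welfare at most $\frac{2\sqrt d}{d}+o(1)$ times the optimal welfare; hence no such mechanism achieves an approximation ratio better than $\Omega(\sqrt d)$.
   Context: Single-item interdependent-value model: agents have private signals $s_j\ge0$ (an agent may have a trivial fixed signal), values $v_i(\mathbf{s})\ge0$ are public functions of the signal profile, weakly increasing in each coordinate. A (randomized) mechanism maps reports $\mathbf{s}$ to winning probabilities $x_i(\mathbf{s})$ with $\sum_i x_i(\mathbf{s})\le1$ and expected payments; it is ex-post IC iff $x_i(s_i,\mathbf{s}_{-i})$ is weakly increasing in $s_i$ for every $i$ and $\mathbf{s}_{-i}$. Expected welfare at $\mathbf{s}$ is $\sum_i x_i(\mathbf{s})v_i(\mathbf{s})$. $d$-SOS: for every coordinate $j$, $s_j\ge0$, $\delta\ge0$, and $\mathbf{s}'_{-j}\le\mathbf{s}_{-j}$ coordinate-wise, $d\big(v(\mathbf{s}'_{-j},s_j+\delta)-v(\mathbf{s}'_{-j},s_j)\big)\ge v(\mathbf{s}_{-j},s_j+\delta)-v(\mathbf{s}_{-j},s_j)$; SOS means $d=1$. *)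

From Stdlib Require Import Reals Lra Arith.
Open Scope R_scope.

(* Agents are 0..n-1; a signal profile is s : nat -> R.
   triv j = true means agent j has a trivial fixed signal (fixed at 0). *)
Definition profile := nat -> R.

Definition valid (n : nat) (triv : nat -> bool) (s : profile) : Prop :=
  forall j, ((j < n)%nat /\ triv j = false -> 0 <= s j) /\
            (((n <= j)%nat \/ triv j = true) -> s j = 0).

Definition upd (s : profile) (j : nat) (t : R) : profile :=
  fun k => if Nat.eqb k j then t else s k.

Fixpoint rsum (n : nat) (f : nat -> R) : R :=
  match n with O => 0 | S k => rsum k f + f k end.

Fixpoint rmax (n : nat) (f : nat -> R) : R :=
  match n with O => 0 | S k => Rmax (rmax k f) (f k) end.

Definition valuations (n : nat) (triv : nat -> bool) (v : nat -> profile -> R) : Prop :=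
  (forall i s, (i < n)%nat -> valid n triv s -> 0 <= v i s) /\
  (forall i j s t, (i < n)%nat -> (j < n)%nat -> triv j = false ->
     valid n triv s -> s j <= t -> v i s <= v i (upd s j t)).

Definition dSOS (d : R) (n : nat) (triv : nat -> bool) (v : nat -> profile -> R) : Prop :=
  forall i j (s s' : profile) (x delta : R),
    (i < n)%nat -> (j < n)%nat -> triv j = false ->
    valid n triv s -> valid n triv s' ->
    (forall k, k <> j -> s' k <= s k) ->
    0 <= x -> 0 <= delta ->
    d * (v i (upd s' j (x + delta)) - v i (upd s' j x))
      >= v i (upd s j (x + delta)) - v i (upd s j x).

(* randomized allocation rule (feasible) which is ex-post IC, i.e.
   x_j monotone in own signal *)
Definition ICmech (n : nat) (triv : nat -> bool) (x : nat -> profile -> R) : Prop :=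
  (forall i s, (i < n)%nat -> valid n triv s -> 0 <= x i s) /\
  (forall s, valid n triv s -> rsum n (fun i => x i s) <= 1) /\
  (forall j s t, (j < n)%nat -> triv j = false -> valid n triv s ->
     s j <= t -> x j s <= x j (upd s j t)).

Definition welfare (n : nat) (x v : nat -> profile -> R) (s : profile) : R :=
  rsum n (fun i => x i s * v i s).

Definition opt (n : nat) (v : nat -> profile -> R) (s : profile) : R :=
  rmax n (fun i => v i s).

From Stdlib Require Import Reals Lra Lia Classical FunctionalExtensionality.
Open Scope R_scope.

(* Let agent i value the item at kink(sum of the other agents' signals), where
   kink(t) = t + c * max(0, t - (n - 2)).  Every increment of kink over a step delta
   lies between delta and (1 + c) delta, so these valuations are (1 + c)-SOS.
   At the all-ones profile some agent i wins with probability at most 1/n, and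
   by monotonicity of the allocation still does after lowering s_i to 0.  There
   agent i's value is n - 1 + c while every other value is n - 2, so the
   welfare is at most n - 2 + (1 + c)/n.  With n = 2, c = 0 this is half the
   optimum; with n = m, c = m^2 - 1 it is 2m - 2 <= (2/m) (m^2 + m - 2). *)

Lemma rsum_ext n f g :
  (forall k, (k < n)%nat -> f k = g k) -> rsum n f = rsum n g.
Proof.
  induction n as [|n IH]; simpl; intros H; [reflexivity|].
  rewrite IH, H; [reflexivity|lia|]. intros; apply H; lia.
Qed.

Lemma rsum_le n f g :
  (forall k, (k < n)%nat -> f k <= g k) -> rsum n f <= rsum n g.
Proof.
  induction n as [|n IH]; simpl; intros H; [lra|].
  assert (rsum n f <= rsum n g) by (apply IH; intros; apply H; lia).
  specialize (H n ltac:(lia)). lra.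
Qed.

Lemma rsum_lt n f g : (0 < n)%nat ->
  (forall k, (k < n)%nat -> f k < g k) -> rsum n f < rsum n g.
Proof.
  destruct n as [|n]; [lia|]. intros _ H. simpl.
  assert (rsum n f <= rsum n g) by (apply rsum_le; intros; apply Rlt_le, H; lia).
  specialize (H n ltac:(lia)). lra.
Qed.

Lemma rsum_const n a : rsum n (fun _ => a) = INR n * a.
Proof. induction n as [|n IH]; simpl rsum; [simpl; lra|]. rewrite IH, S_INR. lra. Qed.

Lemma rsum_mult_r n f a : rsum n (fun k => f k * a) = rsum n f * a.
Proof. induction n as [|n IH]; simpl; [lra|]. rewrite IH. lra. Qed.

Lemma rsum_exists_le_avg n f a : (0 < n)%nat ->
  rsum n f <= a -> exists i, (i < n)%nat /\ f i <= a / INR n.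
Proof.
  intros Hn Hs. apply NNPP. intros Hno.
  assert (Hlt : rsum n (fun _ => a / INR n) < rsum n f).
  { apply rsum_lt; auto. intros k Hk. apply Rnot_le_lt. intros Hk'. eauto. }
  assert (0 < INR n) by (apply lt_0_INR; lia).
  rewrite rsum_const in Hlt. replace (INR n * (a / INR n)) with a in Hlt by (field; lra).
  lra.
Qed.

Lemma rmax_ge n f i : (i < n)%nat -> f i <= rmax n f.
Proof.
  induction n as [|n IH]; simpl; intros H; [lia|].
  destruct (Nat.eq_dec i n) as [->|Hin]; [apply Rmax_r|].
  eapply Rle_trans; [apply IH; lia|apply Rmax_l].
Qed.

Lemma upd_eq s j y : upd s j y j = y.
Proof. unfold upd. rewrite Nat.eqb_refl. reflexivity. Qed.

Lemma upd_neq s j k y : k <> j -> upd s j y k = s k.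
Proof. intros. unfold upd. destruct (Nat.eqb_spec k j); [lia|reflexivity]. Qed.

Lemma upd_upd_same s j y z : upd (upd s j y) j z = upd s j z.
Proof. apply functional_extensionality; intros k. unfold upd. destruct (k =? j); auto. Qed.

Lemma upd_id s j : upd s j (s j) = s.
Proof. apply functional_extensionality; intros k. unfold upd. destruct (Nat.eqb_spec k j); congruence. Qed.

Lemma rsum_upd n s j y : (j < n)%nat -> rsum n (upd s j y) = rsum n s - s j + y.
Proof.
  induction n as [|n IH]; simpl; intros Hj; [lia|].
  destruct (Nat.eq_dec j n) as [->|Hjn].
  - rewrite upd_eq, (rsum_ext n _ s); [lra|]. intros k Hk. apply upd_neq. lia.
  - rewrite IH, upd_neq by lia. lra.
Qed.

Lemma valid_upd n triv s j y : valid n triv s ->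
  (j < n)%nat -> triv j = false -> 0 <= y -> valid n triv (upd s j y).
Proof.
  intros Hs Hj Htj Hy k. destruct (Nat.eq_dec k j) as [->|Hkj].
  - rewrite upd_eq. split; [auto|]. intros [Hnj|Ht]; [lia|congruence].
  - rewrite upd_neq by auto. apply Hs.
Qed.

Lemma ICmech_lower_own_signal n triv x s j y : ICmech n triv x ->
  (j < n)%nat -> triv j = false -> valid n triv s -> 0 <= y -> y <= s j ->
  x j (upd s j y) <= x j s.
Proof.
  intros (_ & _ & Hmono) Hj Htj Hs Hy Hys.
  rewrite <- (upd_id s j) at 2. rewrite <- (upd_upd_same s j y (s j)).
  apply Hmono; auto; [apply valid_upd; auto|]. rewrite upd_eq. auto.
Qed.

Lemma ICmech_exists_small_share n triv x s : ICmech n triv x ->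
  (0 < n)%nat -> valid n triv s -> exists i, (i < n)%nat /\ x i s <= 1 / INR n.
Proof. intros (_ & Hfeas & _) Hn Hs. apply rsum_exists_le_avg; auto. Qed.

Lemma welfare_two_levels n x v s i lo : (i < n)%nat ->
  (forall j, (j < n)%nat -> j <> i -> v j s = lo) ->
  welfare n x v s = lo * rsum n (fun j => x j s) + (v i s - lo) * x i s.
Proof.
  intros Hi Hlo. unfold welfare.
  rewrite (rsum_ext n _ (upd (fun j => x j s * lo) i (x i s * v i s))).
  - rewrite rsum_upd, rsum_mult_r by auto. lra.
  - intros j Hj. destruct (Nat.eq_dec j i) as [->|Hji].
    + rewrite upd_eq. reflexivity.
    + rewrite upd_neq, Hlo by auto. reflexivity.
Qed.

Definition kink (c a t : R) : R := t + c * Rmax 0 (t - a).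

Lemma kink_incr c a t delta : 0 <= c -> 0 <= delta ->
  delta <= kink c a (t + delta) - kink c a t <= (1 + c) * delta.
Proof.
  intros Hc Hd. unfold kink.
  assert (0 <= Rmax 0 (t + delta - a) - Rmax 0 (t - a) <= delta).
  { unfold Rmax. destruct (Rle_dec 0 (t + delta - a)), (Rle_dec 0 (t - a)); lra. }
  split; nra.
Qed.

Lemma kink_le c a t1 t2 : 0 <= c -> t1 <= t2 -> kink c a t1 <= kink c a t2.
Proof.
  intros Hc Ht. pose proof (kink_incr c a t1 (t2 - t1) Hc ltac:(lra)).
  replace (t1 + (t2 - t1)) with t2 in * by ring. lra.
Qed.

Lemma kink_ge_id c a t : 0 <= c -> t <= kink c a t.
Proof. intros Hc. unfold kink. pose proof (Rmax_l 0 (t - a)). nra. Qed.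

Definition others (n : nat) (s : profile) (i : nat) : R := rsum n (upd s i 0).

Definition kink_val (n : nat) (c a : R) (i : nat) (s : profile) : R :=
  kink c a (others n s i).

Lemma others_upd_other n s i j y : (j < n)%nat -> j <> i ->
  others n (upd s j y) i = others n (upd s j 0) i + y.
Proof.
  intros Hj Hji. unfold others.
  replace (upd (upd s j y) i 0) with (upd (upd (upd s j 0) i 0) j y).
  - rewrite rsum_upd, upd_neq, upd_eq by auto. lra.
  - apply functional_extensionality; intros k. unfold upd.
    destruct (Nat.eqb_spec k j), (Nat.eqb_spec k i); subst; auto; lia.
Qed.

Lemma others_upd_self n s i y : others n (upd s i y) i = others n s i.
Proof. unfold others. rewrite upd_upd_same. reflexivity. Qed.

Lemma kink_val_valuations n c a : 0 <= c ->
  valuations n (fun _ => false) (kink_val n c a).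
Proof.
  intros Hc. split.
  - intros i s Hi Hs. eapply Rle_trans; [|apply kink_ge_id; auto].
    apply Rle_trans with (rsum n (fun _ => 0)); [rewrite rsum_const; lra|].
    apply rsum_le. intros k Hk. unfold upd. destruct (k =? i); [lra|]. apply Hs. auto.
  - intros i j s t Hi Hj _ _ Hst. apply kink_le; auto. apply rsum_le.
    intros k Hk. unfold upd. destruct (k =? i); [lra|].
    destruct (Nat.eqb_spec k j); subst; lra.
Qed.

(* The SOS inequality holds for any pair of base profiles: the increments of
   [kink] are pinned between [delta] and [(1 + c) delta] wherever they start. *)
Lemma kink_val_dSOS d n c a : 0 <= c -> 1 + c <= d ->
  dSOS d n (fun _ => false) (kink_val n c a).
Proof.
  intros Hc Hd i j s s' x0 delta Hi Hj _ _ _ _ _ Hdelta. unfold kink_val.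
  destruct (Nat.eq_dec j i) as [->|Hji].
  - rewrite !others_upd_self. lra.
  - rewrite (others_upd_other n s' i j (x0 + delta)), (others_upd_other n s' i j x0),
      (others_upd_other n s i j (x0 + delta)), (others_upd_other n s i j x0) by auto.
    rewrite <- !Rplus_assoc.
    pose proof (kink_incr c a (others n (upd s' j 0) i + x0) delta Hc Hdelta) as [Hlow _].
    pose proof (kink_incr c a (others n (upd s j 0) i + x0) delta Hc Hdelta) as [_ Hhigh].
    apply Rle_ge. eapply Rle_trans; [exact Hhigh|].
    eapply Rle_trans; [apply Rmult_le_compat_r; [exact Hdelta|exact Hd]|].
    apply Rmult_le_compat_l; lra.
Qed.

Definition ones (n : nat) : profile := fun k => if (k <? n)%nat then 1 else 0.

Lemma ones_lt n k : (k < n)%nat -> ones n k = 1.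
Proof. intros Hk. unfold ones. destruct (Nat.ltb_spec k n); [reflexivity|lia]. Qed.

Lemma valid_ones n : valid n (fun _ => false) (ones n).
Proof.
  intros j. unfold ones. destruct (Nat.ltb_spec j n) as [Hj|Hj]; split; intros Hcase; try lra.
  destruct Hcase as [Hcase|Hcase]; [lia|discriminate].
Qed.

Lemma rsum_ones n : rsum n (ones n) = INR n.
Proof.
  rewrite <- (Rmult_1_r (INR n)), <- rsum_const.
  apply rsum_ext. intros. apply ones_lt. auto.
Qed.

Lemma others_ones_drop_self n i : (i < n)%nat ->
  others n (upd (ones n) i 0) i = INR n - 1.
Proof. intros Hi. rewrite others_upd_self. unfold others. rewrite rsum_upd, rsum_ones, ones_lt; auto; lra. Qed.

Lemma others_ones_drop_other n i j : (i < n)%nat -> (j < n)%nat -> j <> i ->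
  others n (upd (ones n) i 0) j = INR n - 2.
Proof.
  intros Hi Hj Hji. unfold others.
  rewrite !rsum_upd, rsum_ones, upd_neq, !ones_lt by auto. lra.
Qed.

Lemma kink_val_welfare_bound n c x : (2 <= n)%nat -> 0 <= c ->
  ICmech n (fun _ => false) x ->
  exists s, valid n (fun _ => false) s /\
    INR n - 1 + c <= opt n (kink_val n c (INR n - 2)) s /\
    welfare n x (kink_val n c (INR n - 2)) s <= INR n - 2 + (1 + c) / INR n.
Proof.
  intros Hn Hc Hx.
  assert (HnR : 2 <= INR n) by (replace 2 with (INR 2) by (simpl; lra); apply le_INR; auto).
  destruct (ICmech_exists_small_share n _ x (ones n) Hx ltac:(lia) (valid_ones n))
    as [i [Hi Hxi]].
  set (s := upd (ones n) i 0).
  assert (Hs : valid n (fun _ => false) s) by (apply valid_upd; auto using valid_ones; lra).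
  assert (Hxs : x i s <= 1 / INR n).
  { eapply Rle_trans; [|exact Hxi].
    apply (ICmech_lower_own_signal n (fun _ => false) x); auto using valid_ones; try lra.
    rewrite ones_lt; auto; lra. }
  assert (Hvi : kink_val n c (INR n - 2) i s = INR n - 1 + c).
  { unfold kink_val, kink, s. rewrite others_ones_drop_self by auto.
    rewrite Rmax_right; lra. }
  assert (Hvj : forall j, (j < n)%nat -> j <> i -> kink_val n c (INR n - 2) j s = INR n - 2).
  { intros j Hj Hji. unfold kink_val, kink, s. rewrite others_ones_drop_other by auto.
    rewrite Rmax_left; lra. }
  exists s. split; [auto|split].
  - rewrite <- Hvi. apply (rmax_ge n (fun j => kink_val n c (INR n - 2) j s)). auto.
  - destruct Hx as (Hx0 & Hfeas & _).
    rewrite (welfare_two_levels n x _ s i (INR n - 2)), Hvi by auto.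
    pose proof (Hfeas s Hs). pose proof (Hx0 i s Hi Hs).
    assert ((1 + c) * x i s <= (1 + c) / INR n).
    { unfold Rdiv. rewrite <- (Rmult_1_l (/ INR n)). apply Rmult_le_compat_l; lra. }
    nra.
Qed.

Theorem mainTheorem4 :
  (forall eps : R, 0 < eps ->
     exists (triv : nat -> bool) (v : nat -> profile -> R),
       valuations 2 triv v /\ dSOS 1 2 triv v /\
       forall x : nat -> profile -> R, ICmech 2 triv x ->
         exists s, valid 2 triv s /\ 0 < opt 2 v s /\
           welfare 2 x v s <= (1/2 + eps) * opt 2 v s)
  /\
  (exists f : nat -> R, Un_cv f 0 /\
     forall m : nat, (3 <= m)%nat ->
       let d := INR (m * m) in
       exists (triv : nat -> bool) (v : nat -> profile -> R),
         valuations m triv v /\ dSOS d m triv v /\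
         forall x : nat -> profile -> R, ICmech m triv x ->
           exists s, valid m triv s /\ 0 < opt m v s /\
             welfare m x v s <= (2 * sqrt d / d + f m) * opt m v s).
Proof.
  split.
  - intros eps Heps. exists (fun _ => false), (kink_val 2 0 (INR 2 - 2)).
    split; [apply kink_val_valuations; lra|].
    split; [apply kink_val_dSOS; lra|].
    intros x Hx. destruct (kink_val_welfare_bound 2 0 x) as (s & Hs & Hopt & Hw); auto; [lra|].
    exists s. set (o := opt 2 _ s) in *. set (w := welfare 2 x _ s) in *.
    simpl INR in Hopt, Hw. split; [auto|split; nra].
  - exists (fun _ => 0). split.
    { intros e He. exists 0%nat. intros. unfold R_dist. rewrite Rminus_0_r, Rabs_R0. auto. }
    intros m Hm d.
    assert (HmR : 3 <= INR m) by (replace 3 with (INR 3) by (simpl; lra); apply le_INR; auto).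
    assert (Hd : d = INR m * INR m) by apply mult_INR.
    set (c := INR m * INR m - 1).
    assert (Hc : 1 + c = INR m * INR m) by (unfold c; ring).
    assert (Hc0 : 0 <= c) by nra.
    exists (fun _ => false), (kink_val m c (INR m - 2)).
    split; [apply kink_val_valuations; auto|].
    split; [apply kink_val_dSOS; auto; lra|].
    intros x Hx.
    destruct (kink_val_welfare_bound m c x ltac:(lia) Hc0 Hx) as (s & Hs & Hopt & Hw).
    exists s. set (o := opt m _ s) in *.
    split; [auto|split; [nra|]].
    rewrite Hc in Hw. replace (INR m * INR m / INR m) with (INR m) in Hw by (field; lra).
    rewrite Hd, sqrt_square, Rplus_0_r by lra.
    replace (2 * INR m / (INR m * INR m) * o) with (2 * o / INR m) by (field; lra).
    apply Rmult_le_reg_l with (INR m); [lra|].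
    replace (INR m * (2 * o / INR m)) with (2 * o) by (field; lra).
    nra.
Qed.
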